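(* Let $G$ be a finite group, and let $K$ be a proper normal subgroup of $G$ such that $G/K$ is nilpotent. If $\chi_1,\chi_2\in\mathrm{Irr}(G)$ are such that neither $(\chi_1)_K$ nor $(\chi_2)_K$ is irreducible, then there exists $g\in G$ with $\chi_1(g)=0=\chi_2(g)$.
   Context: $\mathrm{Irr}(G)$ denotes the set of irreducible complex characters of $G$; $\chi_K$ denotes the restriction of $\chi$ to $K$. *)

From mathcomp Require Import all_boot all_order all_algebra all_fingroup all_solvable all_field all_character.

(* Each chi in Irr(G) with chi_K reducible vanishes off a proper normal
   subgroup of G; as G is not the union of two proper subgroups, some g lies
   off both subgroups attached to chi_1 and chi_2.  For the first claim let
   theta be a constituent of chi_K.  If its inertia group T is proper, T lies
   in a maximal subgroup M, normal because G/K is nilpotent, and chi, being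
   induced from T, vanishes off M.  Otherwise chi_K = e theta; for L/K of
   prime order in the centre of G/K, chi_L is still reducible, since an
   irreducible character of L restricts to K either irreducibly or as a sum
   of |L : K| distinct irreducibles, and we induct on |G : K|. *)

Set Warnings "-notation-overridden,-ambiguous-paths".
From mathcomp Require Import all_boot all_order all_algebra all_fingroup all_solvable all_field all_character.

Set Implicit Arguments.
Unset Strict Implicit.
Unset Printing Implicit Defensive.
Import GroupScope GRing.Theory Num.Theory.

Section NilpotentSubgroups.

Variable gT : finGroupType.
Implicit Types G H M : {group gT}.

Lemma nil_maximal_normal G M : nilpotent G -> maximal M G -> M <| G.
Proof.
move=> nilG /maxgroupP[/andP[sMG not_sGM] maxM]; rewrite /normal sMG.
have := subsetIl G 'N(M); rewrite subEproper.
case/predU1P=> [/setIidPl-> // | /maxM/= NM_M]; case/negP: not_sGM.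
by rewrite (nilpotent_sub_norm nilG sMG) // NM_M // subsetI sMG normG.
Qed.

Lemma nil_proper_sub_normal G H :
  nilpotent G -> H \proper G ->
  exists M, [/\ M <| G, H \subset M & M \proper G].
Proof.
move=> nilG prHG; have [defH | [M maxM sHM]] := maximal_exists (proper_sub prHG).
  by rewrite defH properxx in prHG.
by exists M; split; [exact: nil_maximal_normal | | exact: maxgroupp maxM].
Qed.

Lemma nil_normal_prime G :
  nilpotent G -> G :!=: 1 -> exists X : {group gT}, X <| G /\ prime #|X|.
Proof.
move=> nilG ntG; have ntZ : 'Z(G) != 1 by rewrite center_nil_eq1.
have p_pr : prime (pdiv #|'Z(G)|) by rewrite pdiv_prime ?cardG_gt1.
have [x Zx ox] := Cauchy p_pr (pdiv_dvd _).
exists <[x]>%G; split; last by rewrite -orderE ox.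
by apply: sub_center_normal; rewrite cycle_subG.
Qed.

Lemma exists_notin_proper2 G H1 H2 :
  H1 \proper G -> H2 \proper G ->
  exists2 g, g \in G & (g \notin H1) && (g \notin H2).
Proof.
move=> prH1 prH2.
have outside H H' : H' \proper G -> H \subset H' ->
    exists2 g, g \in G & (g \notin H) && (g \notin H').
  move=> /properP[_ [g Gg H'g]] sHH'; exists g => //.
  by rewrite H'g andbT; apply: contra H'g; apply: (subsetP sHH').
have [sH12 | /subsetPn[a H1a H2'a]] := boolP (H1 \subset H2); first exact: outside.
have [sH21 | /subsetPn[b H2b H1'b]] := boolP (H2 \subset H1).
  by have [g Gg] := outside _ _ prH1 sH21; rewrite andbC; exists g.
exists (a * b).
  exact: groupM (subsetP (proper_sub prH1) a H1a) (subsetP (proper_sub prH2) b H2b).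
by rewrite (groupMl _ H1a) (groupMr _ H2b) H1'b.
Qed.

End NilpotentSubgroups.

Section NilpotentQuotient.

Variables (gT : finGroupType) (G K : {group gT}).
Hypotheses (nKG : K <| G) (nilGK : nilpotent (G / K)).

Lemma quotient_nil_proper_sub_normal (T : {group gT}) :
  K \subset T -> T \proper G ->
  exists M : {group gT}, [/\ M <| G, T \subset M & M \proper G].
Proof.
move=> sKT prTG; have nKT : K <| T := normalS sKT (proper_sub prTG) nKG.
have prTGbar : T / K \proper G / K by rewrite quotient_proper.
have [Mbar [nMGbar sTMbar prMGbar]] := nil_proper_sub_normal nilGK prTGbar.
have [M defMbar sKM nMG] := inv_quotientN nKG nMGbar.
have nKM : K <| M := normalS sKM (normal_sub nMG) nKG.
exists M; split=> //.
  by rewrite -(quotientSGK (normal_norm nKT) sKM) -defMbar.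
by rewrite -(quotient_proper nKM nKG) -defMbar.
Qed.

Lemma quotient_nil_prime_index :
  K \proper G -> exists L : {group gT}, [/\ L <| G, K \subset L & prime #|L : K|].
Proof.
move=> prKG; have ntGK : G / K != 1 by rewrite quotient_neq1.
have [Xbar [nXGbar pXbar]] := nil_normal_prime nilGK ntGK.
have [L defXbar sKL nLG] := inv_quotientN nKG nXGbar.
exists L; split=> //; rewrite -card_quotient -?defXbar //.
exact: subset_trans (normal_sub nLG) (normal_norm nKG).
Qed.

Lemma nil_quotient_sup (L : {group gT}) :
  L <| G -> K \subset L -> nilpotent (G / L).
Proof.
move=> nLG sKL; rewrite -(isog_nil (third_isog sKL nKG nLG)).
exact: quotient_nil.
Qed.

End NilpotentQuotient.

Local Open Scope ring_scope.

Section IrrVanishing.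

Variable gT : finGroupType.
Implicit Types G H K L M T : {group gT}.

Lemma cfInd_on_normal G M T (psi : 'CF(T)) :
  M <| G -> T \subset M -> 'Ind[G] psi \in 'CF(G, M).
Proof.
by move=> nMG sTM; rewrite -(cfIndInd _ (normal_sub nMG) sTM) cfInd_normal.
Qed.

Lemma irr_on_normal_Inertia G K M (i : Iirr G) (t : Iirr K) :
  K <| G -> t \in irr_constt ('Res[K] 'chi_i) ->
  M <| G -> 'I_G['chi_t] \subset M -> 'chi_i \in 'CF(G, M).
Proof.
move=> nKG tK nMG sTM; have [IndA _ IndAB _ _] := constt_Inertia_bijection t nKG.
have : i \in irr_constt ('Ind[G] 'chi_t) by rewrite constt_Ind_Res.
rewrite -IndAB => /imsetP[s sA ->].
by rewrite cfIirrE ?IndA // cfInd_on_normal.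
Qed.

Lemma sum_irr_inj_neq_scale H p (c : 'I_p -> Iirr H) (t : Iirr H) a :
  injective c -> (1 < p)%N -> \sum_(k < p) 'chi_(c k) != a *: 'chi_t.
Proof.
move=> injc p_gt1; have [k ckt] : exists k, c k != t.
  pose k0 := Ordinal (ltnW p_gt1); pose k1 := Ordinal p_gt1.
  have [<- | ] := eqVneq (c k0) t; last by exists k0.
  by exists k1; rewrite (inj_eq injc).
apply: contra_neq (oner_neq0 algC) => /(congr1 (cfdotr 'chi_(c k)))/=.
rewrite cfdotZl cfdot_irr mulrb ifN_eqC // mulr0 => <-.
rewrite cfdot_suml (bigD1 k) //= cfnorm_irr big1 ?addr0 // => l lk.
by rewrite cfdot_irr mulrb ifN_eq ?(inj_eq injc).
Qed.

Lemma invariant_Res_prime_irr G L K (i : Iirr G) (t : Iirr K) :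
  K <| G -> K \subset L -> L \subset G -> prime #|L : K| ->
  G \subset 'I['chi_t] -> t \in irr_constt ('Res[K] 'chi_i) ->
  'Res[L] 'chi_i \in irr L -> 'Res[K] 'chi_i \in irr K.
Proof.
move=> nKG sKL sLG pLK IGt tK /irrP[j Dj].
have nKL : K <| L := normalS sKL sLG nKG.
have homog := Clifford_Res_sum_cfclass nKG tK.
rewrite cfclass_invariant // big_seq1 -(cfResRes _ sKL sLG) Dj in homog *.
have [// | [c injc Dsum]] := cfRes_prime_irr_cases j nKL (erefl _) pLK.
have := sum_irr_inj_neq_scale t '['Res[K] 'chi_j, 'chi_t] injc (prime_gt1 pLK).
by rewrite -Dsum -homog eqxx.
Qed.

Lemma Res_reducible_irr_on_proper_normal G K (i : Iirr G) :
  K <| G -> nilpotent (G / K)%g -> 'Res[K] 'chi_i \notin irr K ->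
  exists M, [/\ M <| G, M \proper G & 'chi_i \in 'CF(G, M)].
Proof.
have [n] := ubnP #|G : K|; elim: n K => // n IHn K /ltnSE-leGKn nKG nilGK redK.
have sKG := normal_sub nKG; have [t tK] := constt_cfRes_irr K i.
have [prTG | ] := boolP ('I_G['chi_t] \proper G).
  have [M [nMG sTM prMG]] :=
    quotient_nil_proper_sub_normal nKG nilGK (sub_Inertia _ sKG) prTG.
  by exists M; split; last exact: irr_on_normal_Inertia tK nMG sTM.
rewrite properEneq Inertia_sub andbT negbK => /eqP defT.
have IGt : G \subset 'I['chi_t] by rewrite -defT subsetIr.
have prKG : K \proper G.
  rewrite properEneq sKG andbT; apply: contra redK => /eqP ->.
  by rewrite cfRes_id mem_irr.
have [L [nLG sKL pLK]] := quotient_nil_prime_index nKG nilGK prKG.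
have ltGLn : (#|G : L| < n)%N.
  apply: leq_trans leGKn; rewrite -(Lagrange_index (normal_sub nLG) sKL).
  by rewrite ltn_Pmulr ?prime_gt1 ?indexg_gt0.
apply: (IHn L ltGLn nLG (nil_quotient_sup nKG nilGK nLG sKL)).
by apply: contra redK; apply: invariant_Res_prime_irr nKG sKL (normal_sub nLG) pLK IGt tK.
Qed.

End IrrVanishing.

Theorem lemma3p2 (gT : finGroupType) (G K : {group gT})
  (nKG : K <| G) (properKG : K \proper G) (nilGK : nilpotent (G / K))
  (i1 i2 : Iirr G) :
  'Res[K] 'chi_i1 \notin irr K ->
  'Res[K] 'chi_i2 \notin irr K ->
  exists2 g, g \in G & ('chi_i1 g = 0 /\ 'chi_i2 g = 0).
Proof.
(* [properKG] is redundant: chi_K is irreducible when K = G. *)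
move=> red1 red2.
have [M1 [_ prM1 chi1_on]] := Res_reducible_irr_on_proper_normal nKG nilGK red1.
have [M2 [_ prM2 chi2_on]] := Res_reducible_irr_on_proper_normal nKG nilGK red2.
have [g Gg /andP[M1'g M2'g]] := exists_notin_proper2 prM1 prM2.
by exists g => //; split; [exact: cfun_on0 chi1_on M1'g | exact: cfun_on0 chi2_on M2'g].
Qed.
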